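(* Let $n>2k>0$ be integers and suppose that $\mathcal G\subset\binom{[n-1]}{k-1}$ and $\mathcal H\subset\binom{[n-1]}{k}$ are cross-intersecting and $|\mathcal G|>\binom{n-1}{k-1}-\binom{n-k}{k-1}$. Then $|\mathcal H|\le k-1$.
   Context: $[m]=\{1,\dots,m\}$ and $\binom{[m]}{t}$ is the collection of all $t$-element subsets of $[m]$. Two families $\mathcal G,\mathcal H$ are cross-intersecting if $G\cap H\neq\emptyset$ for all $G\in\mathcal G$, $H\in\mathcal H$. *)

From mathcomp Require Import all_boot.
Set Implicit Arguments. Unset Strict Implicit. Unset Printing Implicit Defensive.

(* Ground set [m] is modelled by the finite type 'I_m = {0,...,m-1}. *)

Definition uniform_family (m t : nat) (F : {set {set 'I_m}}) : Prop :=
  forall A, A \in F -> #|A| = t.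

Definition cross_intersecting (m : nat) (G H : {set {set 'I_m}}) : Prop :=
  forall A B, A \in G -> B \in H -> A :&: B != set0.

(* Choose k members A_1, ..., A_k of H; no (k-1)-set disjoint from one of them lies in G.
   Fix a set Y of at most j points meeting each of A_1, ..., A_j and avoiding A_(j+1):
   the (k-1)-sets containing Y and disjoint from A_(j+1) miss A_(j+1) but no earlier A_i,
   and there are at least C(n-1-k-j, k-1-j) of them. By the hockey-stick identity these
   counts add up to C(n-k, k-1), which leaves fewer than |G| candidates for G. *)

From mathcomp Require Import all_boot.
From mathcomp Require Import zify.

Set Implicit Arguments. Unset Strict Implicit. Unset Printing Implicit Defensive.

Lemma sum_bin_antidiag m t :
  t <= m -> \sum_(j < t.+1) 'C(m - j, t - j) = 'C(m.+1, t).
Proof.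
elim: t m => [|t IH] m le_tm; first by rewrite big_ord1 !bin0.
case: m le_tm => // m le_tm.
by rewrite big_ord_recl /= subn0 [RHS]binS -IH.
Qed.

Lemma leq_bin_addn n m d : 'C(n, m) <= 'C(n + d, m + d).
Proof.
elim: d => [|d IH]; first by rewrite !addn0.
by rewrite !addnS binS (leq_trans IH) ?leq_addl.
Qed.

Section Misses.

Variables (T : finType) (k t : nat).

Definition misses (S : {set {set T}}) : {set {set T}} :=
  [set F : {set T} | (#|F| == t) && [exists B in S, [disjoint F & B]]].

Lemma missesS (S1 S2 : {set {set T}}) : S1 \subset S2 -> misses S1 \subset misses S2.
Proof.
move=> /subsetP sS12; apply/subsetP => F; rewrite !inE => /andP[-> /existsP[B]].
by case/andP => /sS12 BS2 dFB; apply/existsP; exists B; rewrite BS2.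
Qed.

Lemma transversal_avoiding (A : {set T}) (S : {set {set T}}) :
    {in S, forall B : {set T}, ~~ (B \subset A)} ->
  exists Y : {set T},
    [/\ [disjoint Y & A], #|Y| <= #|S|
       & {in S, forall B : {set T}, ~~ [disjoint Y & B]}].
Proof.
move=> notsubA; have [->|[B0 B0S]] := set_0Vmem S.
  by exists set0; split; rewrite ?disjoints_subset ?sub0set ?cards0 // => B; rewrite inE.
have [x0 _ _] := subsetPn (notsubA B0 B0S).
pose y (B : {set T}) := odflt x0 [pick x in B :\: A].
have yP B : B \in S -> y B \in B :\: A.
  move=> BS; have [x xB xA] := subsetPn (notsubA B BS).
  rewrite /y; case: pickP => [//|/(_ x)]; by rewrite !inE xA xB.
exists [set y B | B in S]; split; last 2 first.
- exact: leq_imset_card.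
- move=> B BS; apply/pred0Pn; exists (y B).
  by have := yP B BS; rewrite !inE imset_f // => /andP[].
rewrite disjoints_subset; apply/subsetP => _ /imsetP[B BS ->].
by have := yP B BS; rewrite !inE => /andP[].
Qed.

Lemma card_setD_misses (S : {set {set T}}) :
  #|[set F : {set T} | #|F| == t] :\: misses S| = 'C(#|T|, t) - #|misses S|.
Proof.
have sub_t : misses S \subset [set F : {set T} | #|F| == t].
  by apply/subsetP => F; rewrite !inE => /andP[].
by rewrite cardsD (setIidPr sub_t) card_draws.
Qed.

Hypothesis t_le : t <= #|T| - k.

Lemma card_misses_setD1 (S : {set {set T}}) (A : {set T}) :
    A \in S -> {in S, forall B : {set T}, #|B| = k} -> #|S :\ A| <= t ->
  #|misses (S :\ A)| + 'C(#|T| - k - #|S :\ A|, t - #|S :\ A|) <= #|misses S|.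
Proof.
move=> AS cardSk; set S' := S :\ A => s_le.
have notsubA : {in S', forall B : {set T}, ~~ (B \subset A)}.
  move=> B; rewrite in_setD1 => /andP[/negP BA BS]; apply/negP => sBA; apply: BA.
  by rewrite eqEcard sBA (cardSk A AS) (cardSk B BS) leqnn.
have [Y [dYA cardY hitY]] := transversal_avoiding notsubA.
pose C := ~: (A :|: Y).
pose N := [set Y :|: Z | Z in [set Z : {set T} | Z \subset C & #|Z| == t - #|Y|]].
have disjCY (Z : {set T}) : Z \subset C -> [disjoint Z & Y].
  by move=> ZC; rewrite disjoints_subset (subset_trans ZC) // setCS subsetUr.
have cardN : #|N| = 'C(#|T| - k - #|Y|, t - #|Y|).
  rewrite card_in_imset ?cards_draws.
    have := cardsC (A :|: Y); rewrite cardsU setIC (disjoint_setI0 dYA) cards0 subn0.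
    by rewrite (cardSk A AS) => <-; congr 'C(_, _); rewrite /C; lia.
  have setUKr (Z : {set T}) : Z \subset C -> (Y :|: Z) :\: Y = Z.
    by move=> /disjCY/setDidPl dZY; rewrite setDUl setDv set0U.
  move=> Z1 Z2; rewrite !inE => /andP[/setUKr eqZ1 _] /andP[/setUKr eqZ2 _] eqZ.
  by rewrite -eqZ1 -eqZ2 eqZ.
have NM : N \subset misses S.
  apply/subsetP => F /imsetP[Z]; rewrite inE => /andP[ZC /eqP cardZ] ->.
  rewrite inE cardsU setIC (disjoint_setI0 (disjCY Z ZC)) cards0 subn0 cardZ.
  rewrite subnKC ?eqxx /=; last by lia.
  apply/existsP; exists A; rewrite AS disjoints_subset subUset -!disjoints_subset dYA /=.
  by rewrite disjoints_subset (subset_trans ZC) // setCS subsetUl.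
have disjN : [disjoint N & misses S'].
  rewrite -setI_eq0; apply/eqP/setP => F; rewrite !inE.
  apply/negbTE/andP => -[/imsetP[Z _ ->] /andP[_ /existsP[B /andP[BS' dYZB]]]].
  by move: (hitY B BS'); rewrite (disjointWl (subsetUl Y Z) dYZB).
apply: leq_trans (_ : #|misses S' :|: N| <= _); last first.
  by apply: subset_leq_card; rewrite subUset NM missesS // subD1set.
rewrite cardsU setIC (disjoint_setI0 disjN) cards0 subn0 leq_add2l cardN.
have -> : #|T| - k - #|Y| = #|T| - k - #|S'| + (#|S'| - #|Y|) by lia.
have -> : t - #|Y| = t - #|S'| + (#|S'| - #|Y|) by lia.
exact: leq_bin_addn.
Qed.

Lemma card_misses_lb s (S : {set {set T}}) :
    #|S| = s -> s <= t.+1 -> {in S, forall B : {set T}, #|B| = k} ->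
  \sum_(j < s) 'C(#|T| - k - j, t - j) <= #|misses S|.
Proof.
elim: s S => [|s IH] S cardS s_le cardSk; first by rewrite big_ord0.
have [A AS] : exists A, A \in S by apply/card_gt0P; rewrite cardS.
have cardS' : #|S :\ A| = s by move: (cardsD1 A S); rewrite AS cardS => -[].
have cardS'k : {in S :\ A, forall B : {set T}, #|B| = k}.
  by move=> B /setD1P[_ /cardSk].
rewrite big_ord_recr /= (leq_trans _ (card_misses_setD1 AS cardSk _)) ?cardS' //.
by rewrite leq_add2r IH // ltnW.
Qed.

Lemma card_misses_full (S : {set {set T}}) :
    #|S| = t.+1 -> {in S, forall B : {set T}, #|B| = k} ->
  'C((#|T| - k).+1, t) <= #|misses S|.
Proof.
move=> cardS cardSk; rewrite -sum_bin_antidiag //.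
exact: card_misses_lb cardS _ cardSk.
Qed.

End Misses.

Lemma cross_intersecting_sub_misses m t (G H S : {set {set 'I_m}}) :
    uniform_family t G -> cross_intersecting G H -> S \subset H ->
  G \subset [set F : {set 'I_m} | #|F| == t] :\: misses t S.
Proof.
move=> uG cGH /subsetP SH; apply/subsetP => F FG; rewrite !inE uG // eqxx andbT.
apply/existsP => -[B /andP[BS dFB]].
by move: (cGH F B FG (SH B BS)); rewrite setI_eq0 dFB.
Qed.

Theorem corollary2p1 (n k : nat) (G H : {set {set 'I_(n.-1)}}) :
  0 < k -> 2 * k < n ->
  uniform_family (k.-1) G -> uniform_family k H ->
  cross_intersecting G H ->
  'C(n.-1, k.-1) - 'C(n - k, k.-1) < #|G| ->
  #|H| <= k.-1.
Proof.
move=> k_gt0 n_gt uG uH cGH; apply: contraTT; rewrite -ltnNge prednK // => k_le.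
have [S] : exists S, S \in [set S : {set {set 'I_(n.-1)}} | S \subset H & #|S| == k].
  by apply/card_gt0P; rewrite cards_draws bin_gt0.
rewrite inE => /andP[SH /eqP cardS].
have cardSk : {in S, forall B : {set 'I_(n.-1)}, #|B| = k}.
  by move=> B /(subsetP SH) /uH.
have t_le : k.-1 <= #|'I_(n.-1)| - k by rewrite card_ord; lia.
rewrite -(prednK k_gt0) in cardS.
have lb : 'C(n - k, k.-1) <= #|misses k.-1 S|.
  have -> : n - k = (#|'I_(n.-1)| - k).+1 by rewrite card_ord; lia.
  exact (card_misses_full t_le cardS cardSk).
rewrite -leqNgt (leq_trans _ (leq_sub2l _ lb)) //.
rewrite -[X in 'C(X, _) - _]card_ord -card_setD_misses subset_leq_card //.
exact: cross_intersecting_sub_misses uG cGH SH.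
Qed.
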